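(* Let $G:\mathcal{C}\to\mathcal{D}$ and $H:\mathcal{D}\to\mathcal{E}$ be functors. (1) If $G$ and $H$ are naturally full, then $H\circ G$ is naturally full. (2) If $H\circ G$ is naturally full and $H$ is faithful, then $G$ is naturally full.
   Context: For a functor $F:\mathcal{A}\to\mathcal{B}$, let $\mathcal{F}:\mathrm{Hom}_{\mathcal{A}}(\bullet,\bullet)\to\mathrm{Hom}_{\mathcal{B}}(F(\bullet),F(\bullet))$ be the natural transformation (of functors $\mathcal{A}^{op}\times\mathcal{A}\to\mathbf{Sets}$) given by $\mathcal{F}_{A,A'}(f)=F(f)$. The functor $F$ is called naturally full if $\mathcal{F}$ has a right inverse, i.e. there is a natural transformation $\mathcal{P}:\mathrm{Hom}_{\mathcal{B}}(F(\bullet),F(\bullet))\to\mathrm{Hom}_{\mathcal{A}}(\bullet,\bullet)$ with $\mathcal{F}\circ\mathcal{P}=\mathrm{id}$. Explicitly: for all $A,A'$ and $u:F(A)\to F(A')$ one has $F(\mathcal{P}_{A,A'}(u))=u$, and naturality means $\mathcal{P}_{X,T}(F(h)\circ g\circ F(f))=h\circ\mathcal{P}_{Y,Z}(g)\circ f$ for all $f:X\to Y$, $h:Z\to T$ in $\mathcal{A}$ and $g:F(Y)\to F(Z)$ in $\mathcal{B}$. *)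

(* Hom-sets are types with
   Leibniz equality (locally small categories, Hom-functors valued in Sets). *)

Set Implicit Arguments.

Record Category := {
  Obj :> Type;
  Hom : Obj -> Obj -> Type;
  idm : forall A : Obj, Hom A A;
  comp : forall A B C : Obj, Hom B C -> Hom A B -> Hom A C;
  comp_assoc : forall (A B C D : Obj) (f : Hom A B) (g : Hom B C) (h : Hom C D),
      comp h (comp g f) = comp (comp h g) f;
  comp_id_l : forall (A B : Obj) (f : Hom A B), comp (idm B) f = f;
  comp_id_r : forall (A B : Obj) (f : Hom A B), comp f (idm A) = f
}.

Arguments idm {c} A.
Arguments comp {c A B C} _ _.
Arguments Hom {c} _ _.

Record Functor (C D : Category) := {
  fobj :> C -> D;
  fmap : forall (A B : C), Hom A B -> Hom (fobj A) (fobj B);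
  fmap_id : forall A : C, fmap A A (idm A) = idm (fobj A);
  fmap_comp : forall (A B E : C) (f : Hom A B) (g : Hom B E),
      fmap A E (comp g f) = comp (fmap B E g) (fmap A B f)
}.

Arguments fmap {C D} f0 {A B} _.

Definition functor_comp (C D E : Category) (H : Functor D E) (G : Functor C D)
  : Functor C E.
Proof.
  refine {| fobj := fun A => H (G A);
            fmap := fun A B f => fmap H (fmap G f) |}.
  - intro A. rewrite (fmap_id G), (fmap_id H). reflexivity.
  - intros A B X f g. rewrite (fmap_comp G), (fmap_comp H). reflexivity.
Defined.

Definition faithful (C D : Category) (F : Functor C D) : Prop :=
  forall (A A' : C) (f g : Hom A A'), fmap F f = fmap F g -> f = g.

(* F is naturally full: the natural transformation
   Hom_C(-,-) -> Hom_D(F -, F -), f |-> F f, has a right inverse P which is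
   itself a natural transformation (of functors C^op x C -> Sets). *)
Definition naturally_full (C D : Category) (F : Functor C D) : Prop :=
  exists P : forall (A A' : C), Hom (F A) (F A') -> Hom A A',
    (forall (A A' : C) (u : Hom (F A) (F A')), fmap F (P A A' u) = u) /\
    (forall (X Y Z T : C) (f : Hom X Y) (h : Hom Z T) (g : Hom (F Y) (F Z)),
        P X T (comp (fmap F h) (comp g (fmap F f))) = comp h (comp (P Y Z g) f)).


Lemma naturally_full_comp (C D E : Category) (G : Functor C D) (H : Functor D E) :
  naturally_full G -> naturally_full H -> naturally_full (functor_comp H G).
Proof.
  intros [PG [PG_section PG_natural]] [PH [PH_section PH_natural]].
  exists (fun A A' u => PG A A' (PH (G A) (G A') u)). split.
  - intros A A' u. simpl. rewrite PG_section, PH_section. reflexivity.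
  - intros X Y Z T f h g. simpl. rewrite PH_natural. apply PG_natural.
Qed.

Lemma naturally_full_of_comp_faithful (C D E : Category)
    (G : Functor C D) (H : Functor D E) :
  naturally_full (functor_comp H G) -> faithful H -> naturally_full G.
Proof.
  intros [P [P_section P_natural]] H_faithful.
  exists (fun A A' v => P A A' (fmap H v)). split.
  - intros A A' v. apply H_faithful. exact (P_section A A' (fmap H v)).
  - intros X Y Z T f h g. rewrite !(fmap_comp H).
    exact (P_natural X Y Z T f h (fmap H g)).
Qed.

Theorem proposition2p3 :
  forall (C D E : Category) (G : Functor C D) (H : Functor D E),
    (naturally_full G -> naturally_full H -> naturally_full (functor_comp H G)) /\
    (naturally_full (functor_comp H G) -> faithful H -> naturally_full G).
Proof.
  intros C D E G H. split.
  - apply naturally_full_comp.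
  - apply naturally_full_of_comp_faithful.
Qed.
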